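(* Let $M$ be a positive integer, let $\{\alpha_i\}_{i=0}^{M}$ be a log-concave sequence of non-negative real numbers, and let $g(x)=\sum_{i=0}^{M}\alpha_{i}\binom{M}{i}(1-x)^{i}x^{M-i}$. Then for every $x\in(0,1)$, \[ \frac{M-1}{M}\,g'(x)^{2}\;\ge\; g(x)\,g''(x). \]
   Context: A non-negative sequence $\{a_i\}_{i=0}^{n}$ is called log-concave if, for indices $i,j$ with $i+j$ held fixed, the product $a_ia_j$ is a non-increasing function of $|i-j|$. $\binom{M}{i}$ is the ordinary binomial coefficient. *)

From HB Require Import structures.
From mathcomp Require Import all_boot all_order all_algebra.
Set Implicit Arguments. Unset Strict Implicit. Unset Printing Implicit Defensive.
Import Order.TTheory GRing.Theory Num.Theory.
Local Open Scope ring_scope.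

Definition nonneg_seq (R : realDomainType) (M : nat) (a : nat -> R) : Prop :=
  forall i, (i <= M)%N -> 0 <= a i.

(* Log-concavity as in the paper: for indices i,j with i+j fixed,
   a_i a_j is non-increasing in |i-j|.  The absolute difference on nat is
   written (maxn i j - minn i j). *)
Definition log_concave (R : realDomainType) (M : nat) (a : nat -> R) : Prop :=
  forall i j k l : nat,
    (i <= M)%N -> (j <= M)%N -> (k <= M)%N -> (l <= M)%N ->
    (i + j = k + l)%N ->
    (maxn i j - minn i j <= maxn k l - minn k l)%N ->
    a k * a l <= a i * a j.

Definition gpoly (R : realDomainType) (M : nat) (a : nat -> R) : {poly R} :=
  \sum_(i < M.+1) (a i * ('C(M, i))%:R) *: ((1 - 'X) ^+ i * 'X ^+ (M - i)).

From HB Require Import structures.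
From mathcomp Require Import all_boot all_order all_algebra.
From mathcomp Require Import ring lra zify.
From Stdlib Require Import IndefiniteDescription.
Import Order.TTheory GRing.Theory Num.Theory.
Local Open Scope ring_scope.

(* Fix x in (0,1) and put e_i = a_i (1-x)^i x^(M-i); this sequence is again
   log-concave.  Writing T_k for the binomial moments \sum_i C(M,i) w_k(i) e_i
   with weights w_0 = 1, w_1 = i, w_2 = i(i-1), the operator x(1-x) d/dx acts
   diagonally on the Bernstein basis, so g, x(1-x) g' and the second iterate
   of that operator are explicit combinations of T0, T1, T2.  After clearing
   the factor (x(1-x))^2 the claim becomes the Newton-type inequality
   M T0 T2 <= (M-1) T1^2 for log-concave sequences.

   That inequality is proved by writing 2((M-1) T1^2 - M T0 T2) as
   \sum_(i,j) C(M,i) C(M,j) V(i,j) e_i e_j for a symmetric weight V.  The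
   weighted sum of V(i,j) c(i+j) vanishes for every sequence c (a polynomial
   identity derived from (1+X)^M), and on each anti-diagonal i + j = s both
   V(i,j) and e_i e_j increase as |i - j| decreases; subtracting a suitable
   constant c(s) therefore makes every term of the sum nonnegative. *)

Section BinomialMomentIdentity.
Variables (R : comNzRingType) (M : nat).

Definition binom (i : nat) : R := 'C(M, i)%:R.

Definition pair_weight (i j : nat) : R :=
  2 * (M%:R - 1) * (i%:R * j%:R) - M%:R * (i%:R * (i%:R - 1) + j%:R * (j%:R - 1)).

Lemma pair_weightC (i j : nat) : pair_weight i j = pair_weight j i.
Proof. by rewrite /pair_weight; ring. Qed.

Definition moment_poly (w : nat -> R) : {poly R} :=
  \sum_(i < M.+1) (binom i * w i) *: 'X^i.

Lemma X_deriv_sum n (c : 'I_n -> R) :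
  'X * (\sum_(i < n) c i *: 'X^i)^`() = \sum_(i < n) (c i * i%:R) *: 'X^i.
Proof.
rewrite raddf_sum mulr_sumr; apply: eq_bigr => i _.
rewrite /= derivZ derivXn -scalerAr -scalerA scaler_nat; congr (_ *: _).
by case: (nat_of_ord i) => [|k]; rewrite ?mulr0n ?mulr0 // mulrnAr -exprS.
Qed.

(* Closed forms of the generating polynomials of the weights 1, i and i(i-1):
   they are (1+X)^M and its images under X d/dX and X^2 d^2/dX^2. *)
Lemma binomial_poly : \sum_(i < M.+1) binom i *: 'X^i = ('X + 1) ^+ M.
Proof. by rewrite exprD1n; apply: eq_bigr => i _; rewrite scaler_nat. Qed.

Lemma moment_poly0 : moment_poly (fun=> 1) = ('X + 1) ^+ M.
Proof. by rewrite -binomial_poly; apply: eq_bigr => i _; rewrite mulr1. Qed.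

Lemma moment_poly1 : moment_poly (fun i => i%:R) = M%:R *: ('X * ('X + 1) ^+ M.-1).
Proof.
rewrite /moment_poly -X_deriv_sum binomial_poly deriv_exp derivD derivX derivC.
by rewrite addr0 mul1r scaler_nat mulrnAr.
Qed.

Lemma moment_poly2 :
  moment_poly (fun i => i%:R * (i%:R - 1)) =
  (M%:R * (M%:R - 1)) *: ('X ^+ 2 * ('X + 1) ^+ (M - 2)).
Proof.
have split_weight : moment_poly (fun i => i%:R * (i%:R - 1)) =
    'X * ('X * (moment_poly (fun=> 1))^`())^`() - moment_poly (fun i => i%:R).
  rewrite /moment_poly !X_deriv_sum -sumrB; apply: eq_bigr => i _.
  by rewrite -scalerBl; congr (_ *: _); ring.
rewrite split_weight moment_poly0 moment_poly1.
rewrite deriv_exp derivD derivX derivC addr0 mul1r.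
case: M => [|[|m]] /=.
- by rewrite !(mulr0n, mulr0, deriv0, scale0r, mul0r, subrr).
- by rewrite expr0 mulr1n mulr1 derivX mulr1 scale1r mulr1 !subrr mulr0 scale0r.
rewrite derivM derivX mul1r derivMn deriv_exp derivD derivX derivC addr0 mul1r /= subn2 /=.
rewrite -!mul_polyC polyCM polyCB polyC1 !polyC_natr.
rewrite exprS; move: (('X + 1) ^+ m) => Y.
have -> : (m.+2%:R - 1 : {poly R}) = m.+1%:R by rewrite mulrSr addrK.
ring.
Qed.

Lemma moment_poly_mul (v w : nat -> R) :
  moment_poly v * moment_poly w =
  \sum_(i < M.+1) \sum_(j < M.+1) (binom i * v i * (binom j * w j)) *: 'X^(i + j).
Proof.
rewrite mulr_suml; apply: eq_bigr => i _; rewrite mulr_sumr; apply: eq_bigr => j _.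
by rewrite -scalerAl -scalerAr scalerA exprD.
Qed.

(* The pair weight has vanishing generating polynomial:
   2(M-1) P1^2 = 2M P0 P2 for P0 = (X+1)^M, P1 = MX(X+1)^(M-1), P2 = M(M-1)X^2(X+1)^(M-2). *)
Lemma pair_weight_poly :
  \sum_(i < M.+1) \sum_(j < M.+1) (binom i * binom j * pair_weight i j) *: 'X^(i + j) = 0.
Proof.
pose P0 := moment_poly (fun=> 1); pose P1 := moment_poly (fun i => i%:R).
pose P2 := moment_poly (fun i => i%:R * (i%:R - 1)).
have -> : \sum_(i < M.+1) \sum_(j < M.+1)
    (binom i * binom j * pair_weight i j) *: 'X^(i + j) =
    (2 * (M%:R - 1)) *: (P1 * P1) - M%:R *: (P2 * P0 + P0 * P2).
  rewrite !moment_poly_mul scalerDr !scaler_sumr -big_split -sumrB /=.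
  apply: eq_bigr => i _; rewrite !scaler_sumr -big_split -sumrB; apply: eq_bigr => j _ /=.
  by rewrite !scalerA -scalerDl -scalerBl /pair_weight; congr (_ *: _); ring.
rewrite /P0 /P1 /P2 moment_poly0 moment_poly1 moment_poly2.
set Y0 := ('X + 1) ^+ M; set Y1 := ('X + 1) ^+ M.-1; set Y2 := ('X + 1) ^+ (M - 2).
have square_split : (M%:R - 1) * (Y1 * Y1) = (M%:R - 1) * (Y0 * Y2) :> {poly R}.
  rewrite /Y0 /Y1 /Y2; case: M => [|[|m]]; first by rewrite !expr0.
    by rewrite subrr !mul0r.
  by rewrite -!exprD; congr (_ * _ ^+ _); lia.
rewrite -!mul_polyC !(polyCM, polyCB, polyC1, polyC_natr).
transitivity (2 * M%:R * M%:R * 'X^2 * ((M%:R - 1) * (Y1 * Y1) - (M%:R - 1) * (Y0 * Y2))).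
  ring.
by rewrite square_split subrr mulr0.
Qed.

(* Coefficientwise form of the identity: for every sequence c,
   \sum_(i,j) C(M,i) C(M,j) V(i,j) c(i+j) = 0.  It is read off by pairing the
   polynomial with c, a linear form sending X^k to c(k). *)
Lemma pair_weight_vanish (phi : nat -> R) :
  \sum_(i < M.+1) \sum_(j < M.+1) binom i * binom j * pair_weight i j * phi (i + j)%N = 0.
Proof.
pose pairing (p : {poly R}) := \sum_(k < M.+1 + M.+1) p`_k * phi k.
have pairingX k : (k < M.+1 + M.+1)%N -> pairing 'X^k = phi k.
  move=> lt_k; rewrite /pairing (bigD1 (Ordinal lt_k)) //= coefXn eqxx mul1r.
  rewrite big1 ?addr0 // => n n_neq_k; rewrite coefXn.
  suff /negbTE-> : (n != k :> nat) by rewrite mul0r.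
  by apply: contra n_neq_k => /eqP n_k; apply/eqP/val_inj.
have pairing0 : pairing 0 = 0 by rewrite /pairing big1 // => k _; rewrite coef0 mul0r.
rewrite -[RHS]pairing0 -pair_weight_poly /pairing; symmetry.
under eq_bigr => k _ do rewrite coef_sum mulr_suml.
rewrite [LHS]exchange_big; apply: eq_bigr => i _.
under eq_bigr => k _ do rewrite coef_sum mulr_suml.
rewrite [LHS]exchange_big; apply: eq_bigr => j _.
under eq_bigr => k _ do rewrite coefZ -mulrA.
rewrite -mulr_sumr; congr (_ * _); apply: pairingX.
by have := ltn_ord i; have := ltn_ord j; lia.
Qed.
End BinomialMomentIdentity.

Arguments binom {R} M i.
Arguments pair_weight {R} M i j.
Arguments pair_weight_vanish {R} M phi.

Definition bmoment (R : comNzRingType) (M : nat) (e w : nat -> R) : R :=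
  \sum_(i < M.+1) w i * (binom M i * e i).
Arguments bmoment {R} M e w.

(* If u and v are both nondecreasing on [lo, hi], then u and v - c have the
   same sign for a suitable constant c: take c = v at the first point where
   u becomes nonnegative. *)
Lemma monotone_sign_split (R : realDomainType) (lo hi : nat) (u v : nat -> R) :
  (forall m n, (lo <= m)%N -> (m <= n)%N -> (n <= hi)%N -> u m <= u n) ->
  (forall m n, (lo <= m)%N -> (m <= n)%N -> (n <= hi)%N -> v m <= v n) ->
  exists c, forall m, (lo <= m)%N -> (m <= hi)%N -> 0 <= u m * (v m - c).
Proof.
move=> u_mono v_mono.
pose P m := [&& (lo <= m)%N, (m <= hi)%N & 0 <= u m].
have [/existsP[m0 Pm0] | noP] := boolP [exists m : 'I_hi.+1, P m].
  have [ms /and3P[lo_ms ms_hi u_ms] ms_min] := ex_minnP (ex_intro P _ Pm0).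
  exists (v ms) => m lo_m m_hi.
  have [u_m | u_m] := leP 0 (u m).
    have ms_m : (ms <= m)%N by apply: ms_min; apply/and3P.
    by rewrite mulr_ge0 // subr_ge0 v_mono.
  have m_ms : (m <= ms)%N.
    by rewrite leqNgt; apply/negP => ms_m; have := u_mono ms m lo_ms (ltnW ms_m) m_hi; lra.
  by rewrite mulr_le0 ?(ltW u_m) // subr_le0 v_mono.
exists (v hi) => m lo_m m_hi.
have u_m : u m < 0.
  rewrite ltNge; apply: contraNN noP => u_m.
  by apply/existsP; exists (Ordinal (m_hi : (m < hi.+1)%N)); apply/and3P.
by rewrite mulr_le0 ?(ltW u_m) // subr_le0 v_mono.
Qed.

Section LogConcaveMoments.
Variables (R : realDomainType) (M : nat) (e : nat -> R).
Hypotheses (M_gt0 : (0 < M)%N) (e_lc : log_concave M e).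

Lemma pair_weight_diag_mono (m n s : nat) : (m <= n)%N -> (n + n <= s)%N ->
  pair_weight M m (s - m) <= pair_weight M n (s - n) :> R.
Proof.
move=> m_n n_s; rewrite -subr_ge0.
have -> : pair_weight M n (s - n) - pair_weight M m (s - m) =
    2 * (2 * M%:R - 1) * ((n - m)%N%:R * (s - m - n)%N%:R) :> R.
  by rewrite /pair_weight !natrB; [ring | lia..].
have M_ge1 : 1 <= M%:R :> R by rewrite ler1n.
by rewrite mulr_ge0 // mulr_ge0 //; lra.
Qed.

Lemma lc_diag_mono (m n s : nat) : (s - M <= m)%N -> (m <= n)%N -> (n <= s./2)%N ->
  e m * e (s - m)%N <= e n * e (s - n)%N.
Proof. by move=> *; apply: e_lc; lia. Qed.

Lemma diag_threshold (s : nat) : exists c : R, forall i j : nat,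
  (i <= M)%N -> (j <= M)%N -> (i + j = s)%N -> 0 <= pair_weight M i j * (e i * e j - c).
Proof.
have [c c_spec] : exists c, forall m, (s - M <= m)%N -> (m <= s./2)%N ->
    0 <= pair_weight M m (s - m) * (e m * e (s - m)%N - c).
  apply: monotone_sign_split => m n lo_m m_n n_hi.
    by apply: pair_weight_diag_mono => //; lia.
  exact: lc_diag_mono.
exists c => i j i_M j_M ij_s.
wlog i_j : i j i_M j_M ij_s / (i <= j)%N.
  move=> sym; case: (leqP i j) => [|j_i]; first exact: sym.
  by rewrite pair_weightC [e i * _]mulrC; apply: sym; lia.
have -> : j = (s - i)%N by lia.
by apply: c_spec; lia.
Qed.

(* Newton-type inequality M T0 T2 <= (M-1) T1^2 for the binomial moments of the
   weights 1, i, i(i-1) of a log-concave sequence; the constants c(s) given by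
   diag_threshold can be subtracted for free by pair_weight_vanish. *)
Lemma moment_inequality :
  M%:R * (bmoment M e (fun=> 1) * bmoment M e (fun i => i%:R * (i%:R - 1)))
  <= (M%:R - 1) * bmoment M e (fun i => i%:R) ^+ 2.
Proof.
have [c c_spec] := functional_choice _ diag_threshold.
pose term (i j : 'I_M.+1) : R := binom M i * binom M j * pair_weight M i j.
set T0 := bmoment M e (fun=> 1); set T1 := bmoment M e (fun i => i%:R).
set T2 := bmoment M e (fun i => i%:R * (i%:R - 1)).
have expand : \sum_i \sum_j term i j * (e i * e j) =
    2 * (M%:R - 1) * (T1 * T1) - M%:R * (T2 * T0 + T0 * T2).
  rewrite /T0 /T1 /T2 /bmoment !big_distrlr -big_split /= !mulr_sumr -sumrB.
  apply: eq_bigr => i _; rewrite -big_split /= !mulr_sumr -sumrB.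
  by apply: eq_bigr => j _; rewrite /term /pair_weight; ring.
have shift : \sum_i \sum_j term i j * (e i * e j) =
    \sum_i \sum_j term i j * (e i * e j - c (i + j)%N).
  transitivity (\sum_i \sum_j term i j * (e i * e j) - \sum_i \sum_j term i j * c (i + j)%N).
    by rewrite [X in _ - X](pair_weight_vanish M c) subr0.
  rewrite -sumrB; apply: eq_bigr => i _.
  by rewrite -sumrB; apply: eq_bigr => j _; rewrite mulrBr.
have : 0 <= 2 * (M%:R - 1) * (T1 * T1) - M%:R * (T2 * T0 + T0 * T2).
  rewrite -expand shift; apply: sumr_ge0 => i _; apply: sumr_ge0 => j _.
  rewrite /term -[_ * (_ - _)]mulrA; apply: mulr_ge0; first by rewrite /binom mulr_ge0 ?ler0n.
  by apply: c_spec; rewrite ?leq_ord.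
by rewrite [T2 * T0]mulrC expr2; lra.
Qed.
End LogConcaveMoments.

Section EulerOperator.
Variable R : comNzRingType.

(* The operator x(1-x) d/dx, which acts diagonally on the Bernstein basis. *)
Definition xy_deriv (p : {poly R}) : {poly R} := 'X * (1 - 'X) * p^`().

Definition bernstein (M i : nat) : {poly R} := (1 - 'X) ^+ i * 'X ^+ (M - i).

Lemma xy_derivM (p q : {poly R}) : xy_deriv (p * q) = xy_deriv p * q + p * xy_deriv q.
Proof. by rewrite /xy_deriv derivM; ring. Qed.

Lemma xy_deriv_sum n (c : 'I_n -> R) (p : 'I_n -> {poly R}) :
  xy_deriv (\sum_(i < n) c i *: p i) = \sum_(i < n) c i *: xy_deriv (p i).
Proof.
rewrite /xy_deriv raddf_sum mulr_sumr; apply: eq_bigr => i _.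
by rewrite /= derivZ scalerAr.
Qed.

Lemma xy_deriv_bernstein (M i : nat) : (i <= M)%N ->
  xy_deriv (bernstein M i) = (M%:R * (1 - 'X) - i%:R) * bernstein M i.
Proof.
move=> i_M; rewrite /xy_deriv /bernstein derivM !deriv_exp derivB derivC derivX sub0r.
have pow_pred (p : {poly R}) n : p * (p ^+ n.-1 *+ n) = p ^+ n *+ n.
  by case: n => [|n]; rewrite ?mulr0n ?mulr0 // mulrnAr -exprS.
rewrite -!mulrnAr mulN1r mul1r.
have := pow_pred (1 - 'X) i; have := pow_pred 'X (M - i)%N.
move: ((1 - 'X) ^+ i.-1 *+ i) ((1 - 'X) ^+ i) ('X ^+ (M - i)%N.-1 *+ (M - i)%N) ('X ^+ (M - i)%N).
move=> A Y B Z XB YA.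
transitivity (- ('X * Z) * ((1 - 'X) * A) + (1 - 'X) * Y * ('X * B)); first by ring.
by rewrite XB YA -[Z *+ _]mulr_natr -[Y *+ _]mulr_natr natrB //; ring.
Qed.

Lemma horner_xy_deriv (p : {poly R}) (x : R) :
  (xy_deriv p).[x] = x * (1 - x) * p^`().[x].
Proof. by rewrite /xy_deriv !hornerE. Qed.

Lemma horner_xy_deriv2 (p : {poly R}) (x : R) :
  (xy_deriv (xy_deriv p)).[x] =
  x * (1 - x) * ((1 - 2 * x) * p^`().[x] + x * (1 - x) * p^`(2).[x]).
Proof.
rewrite /xy_deriv derivM derivSn derivn1 !(derivM, derivB, derivX, derivC) !hornerE.
ring.
Qed.
End EulerOperator.

Arguments xy_deriv {R} p.
Arguments bernstein {R} M i.

Definition horner_simpl :=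
  (hornerD, hornerN, hornerM, hornerX, hornerMn, horner_exp, hornerC).

Lemma bmoment_quadratic (R : comNzRingType) (M : nat) (e w : nat -> R) (al be ga : R) :
  (forall i, w i = al + be * i%:R + ga * (i%:R * (i%:R - 1))) ->
  bmoment M e w = al * bmoment M e (fun=> 1) + be * bmoment M e (fun i => i%:R) +
                  ga * bmoment M e (fun i => i%:R * (i%:R - 1)).
Proof.
move=> w_quad; rewrite /bmoment !mulr_sumr -!big_split; apply: eq_bigr => i _ /=.
by rewrite w_quad; ring.
Qed.

Section BernsteinExpansion.
Variables (R : realDomainType) (M : nat) (a : nat -> R) (x : R).

(* The sequence whose binomial moments describe g and its derivatives at x. *)
Let e (i : nat) : R := a i * (bernstein M i).[x].

Lemma xy_deriv_gpoly : xy_deriv (gpoly M a) =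
  \sum_(i < M.+1) (a i * 'C(M, i)%:R) *: ((M%:R * (1 - 'X) - i%:R) * bernstein M i).
Proof.
rewrite /gpoly xy_deriv_sum; apply: eq_bigr => i _.
by rewrite xy_deriv_bernstein // leq_ord.
Qed.

Lemma xy_deriv2_gpoly : xy_deriv (xy_deriv (gpoly M a)) =
  \sum_(i < M.+1) (a i * 'C(M, i)%:R) *:
    (((M%:R * (1 - 'X) - i%:R) ^+ 2 - M%:R * ('X * (1 - 'X))) * bernstein M i).
Proof.
rewrite xy_deriv_gpoly xy_deriv_sum; apply: eq_bigr => i _.
rewrite xy_derivM xy_deriv_bernstein ?leq_ord // /xy_deriv.
by rewrite !(derivB, derivM, derivC, derivX, derivMn); congr (_ *: _); ring.
Qed.

Lemma horner_bernstein_sum (w : nat -> {poly R}) :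
  (\sum_(i < M.+1) (a i * 'C(M, i)%:R) *: (w i * bernstein M i)).[x] =
  bmoment M e (fun i => (w i).[x]).
Proof.
rewrite horner_sum; apply: eq_bigr => i _.
by rewrite hornerZ hornerM /e /binom; ring.
Qed.

Local Notation T0 := (bmoment M e (fun=> 1)).
Local Notation T1 := (bmoment M e (fun i => i%:R)).
Local Notation T2 := (bmoment M e (fun i => i%:R * (i%:R - 1))).

Lemma horner_gpoly : (gpoly M a).[x] = T0.
Proof.
rewrite horner_sum; apply: eq_bigr => i _.
by rewrite hornerZ /e /binom /bernstein; ring.
Qed.

Lemma gpoly_deriv_moments :
  x * (1 - x) * ((gpoly M a)^`()).[x] = M%:R * (1 - x) * T0 - T1.
Proof.
rewrite -horner_xy_deriv xy_deriv_gpoly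
  (horner_bernstein_sum (fun i => M%:R * (1 - 'X) - i%:R)).
rewrite (bmoment_quadratic _ _ _ _ (M%:R * (1 - x)) (-1) 0); first by ring.
by move=> i; rewrite -!polyC1 !horner_simpl; ring.
Qed.

Lemma gpoly_deriv2_moments :
  x * (1 - x) * ((1 - 2 * x) * ((gpoly M a)^`()).[x] + x * (1 - x) * ((gpoly M a)^`(2)).[x])
  = (M%:R ^+ 2 * (1 - x) ^+ 2 - M%:R * (x * (1 - x))) * T0
    + (1 - 2 * M%:R * (1 - x)) * T1 + T2.
Proof.
rewrite -horner_xy_deriv2 xy_deriv2_gpoly (horner_bernstein_sum
  (fun i => (M%:R * (1 - 'X) - i%:R) ^+ 2 - M%:R * ('X * (1 - 'X)))).
rewrite (bmoment_quadratic _ _ _ _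
  (M%:R ^+ 2 * (1 - x) ^+ 2 - M%:R * (x * (1 - x))) (1 - 2 * M%:R * (1 - x)) 1); first by ring.
by move=> i; rewrite -!polyC1 !horner_simpl; ring.
Qed.

Lemma log_concave_bernstein : 0 <= x <= 1 -> log_concave M a -> log_concave M e.
Proof.
move=> /andP[x_ge0 x_le1] a_lc i j k l i_M j_M k_M l_M ij_kl dist.
have bern_mul (p q : nat) : (p <= M)%N -> (q <= M)%N ->
    (bernstein M p).[x] * (bernstein M q).[x] =
    (1 - x) ^+ (p + q) * x ^+ (M - p + (M - q)).
  by move=> *; rewrite /bernstein -!polyC1 !horner_simpl !exprD; ring.
have same_bern : (bernstein M k).[x] * (bernstein M l).[x] =
    (bernstein M i).[x] * (bernstein M j).[x].
  rewrite !bern_mul // ij_kl; congr (_ * x ^+ _); lia.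
have -> : e k * e l = a k * a l * ((bernstein M i).[x] * (bernstein M j).[x]).
  by rewrite -same_bern /e; ring.
have -> : e i * e j = a i * a j * ((bernstein M i).[x] * (bernstein M j).[x]).
  by rewrite /e; ring.
apply: ler_wpM2r; last exact: a_lc.
by rewrite bern_mul // mulr_ge0 // exprn_ge0 // subr_ge0.
Qed.
End BernsteinExpansion.

Lemma moment_transfer (R : realFieldType) (M x g g1 g2 T0 T1 T2 : R) :
  0 < x < 1 -> 0 < M -> g = T0 ->
  x * (1 - x) * g1 = M * (1 - x) * T0 - T1 ->
  x * (1 - x) * ((1 - 2 * x) * g1 + x * (1 - x) * g2) =
    (M ^+ 2 * (1 - x) ^+ 2 - M * (x * (1 - x))) * T0 + (1 - 2 * M * (1 - x)) * T1 + T2 ->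
  M * (T0 * T2) <= (M - 1) * T1 ^+ 2 ->
  g * g2 <= (M - 1) / M * g1 ^+ 2.
Proof.
move=> /andP[x_gt0 x_lt1] M_gt0 g_T0 g1_T g2_T newton.
have s_gt0 : 0 < x * (1 - x) by rewrite mulr_gt0 // subr_gt0.
have key : (x * (1 - x)) ^+ 2 * ((M - 1) * g1 ^+ 2 - M * (g * g2)) =
    (M - 1) * T1 ^+ 2 - M * (T0 * T2).
  transitivity ((M - 1) * (x * (1 - x) * g1) ^+ 2 - M * g *
    (x * (1 - x) * ((1 - 2 * x) * g1 + x * (1 - x) * g2) - (1 - 2 * x) * (x * (1 - x) * g1))).
    by ring.
  by rewrite g2_T g1_T g_T0; ring.
have diff_ge0 : 0 <= (M - 1) * g1 ^+ 2 - M * (g * g2).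
  by rewrite -(pmulr_rge0 _ (exprn_gt0 2 s_gt0)) key subr_ge0.
rewrite -subr_ge0.
have -> : (M - 1) / M * g1 ^+ 2 - g * g2 = ((M - 1) * g1 ^+ 2 - M * (g * g2)) / M.
  by field; rewrite lt0r_neq0.
by rewrite divr_ge0 // ltW.
Qed.

(* Main theorem: the sequence a only needs to be log-concave; x(1-x) > 0 allows the transfer from the moment inequality. *)
Theorem mainTheorem4 (R : realFieldType) (M : nat) (a : nat -> R) :
  (0 < M)%N -> nonneg_seq M a -> log_concave M a ->
  forall x : R, 0 < x < 1 ->
    (gpoly M a).[x] * ((gpoly M a)^`(2)).[x]
      <= ((M.-1)%:R / M%:R) * ((gpoly M a)^`()).[x] ^+ 2.
Proof.
move=> M_gt0 _ a_lc x x01.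
have x_unit : 0 <= x <= 1 by case/andP: x01 => x_gt0 x_lt1; rewrite !ltW.
have -> : (M.-1)%:R = M%:R - 1 :> R by rewrite -subn1 natrB.
apply: (@moment_transfer R M%:R x).
- exact: x01.
- by rewrite ltr0n.
- exact: horner_gpoly.
- exact: gpoly_deriv_moments.
- exact: gpoly_deriv2_moments.
exact/moment_inequality/log_concave_bernstein.
Qed.
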